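(* Let $\mu$ be a monotone system over $\{0,1\}^V$, $\theta\in(0,1)$, $T_1,T_2\ge1$. Let $\pi^{(t)}_{\mathrm{alg}}$ be the law of $X^{(t)}_{\mathrm{alg}}$ (generated by $\mathcal A_\mu(\theta,T_1,T_2)$) and $\pi^{(t)}_{\mathrm{GD}}$ the law of $X^{(t)}_{\pi\text{-GD}}$, the Glauber dynamics on $\pi$ started from $X^{(0)}_{\pi\text{-GD}}=\mathsf{lift}(\mathbf 1_V)$. Then for every $t\ge0$ (with $t\le T_1T_2$), $\pi^{(t)}_{\mathrm{GD}}\preceq_{\mathrm{sd}}\pi^{(t)}_{\mathrm{alg}}$.
   Context: Monotone system: for every $v$ and all feasible $\sigma\preceq\tau$ in $\{0,1\}^{V\setminus\{v\}}$ (coordinatewise order), $\mu^\sigma_v(1)\le\mu^\tau_v(1)$. Tilted $(\theta*\mu)(\sigma)\propto\mu(\sigma)\theta^{\|\sigma\|_1}$. $\mathsf{lift}$: random map $\{0,1\}^V\to\{0,1,\star\}^V$, independently per coordinate $0\mapsto0$, $1\mapsto\star$ w.p. $1-\theta$, $1\mapsto1$ w.p. $\theta$. $\mathsf{contr}$: $0\mapsto0$, $1,\star\mapsto1$. $\pi$ is the law of $\mathsf{lift}(X)$ for $X\sim\mu$. Glauber dynamics on $\pi$: pick $v$ uniformly, resample $X_v\in\{0,1,\star\}$ from $\pi$ conditioned on $X_{V\setminus\{v\}}$. On $\{0,1,\star\}^V$ use the order $0<1<\star$ and the coordinatewise partial order; $\nu\preceq_{\mathrm{sd}}\nu'$ means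 there is a coupling $(X,Y)$ with $X\sim\nu$, $Y\sim\nu'$, $X\preceq Y$ a.s. Algorithm $\mathcal A_\mu(\theta,T_1,T_2)$: set $X=\mathsf{lift}(\mathbf 1_V)$; repeat $T_1$ times: (a) $X\gets\mathsf{contr}(X)$; (b) $X\gets\mathsf{lift}(X)$, $S=\{v:X_v\ne\star\}$; (c) repeat $T_2$ times: pick $v$ uniformly; if $v\in S$ resample $X_v\sim(\theta*\mu)_v^{\sigma_{V\setminus\{v\}}}$ with $\sigma=\mathsf{contr}(X)$, else keep $X_v=\star$. $X^{(0)}_{\mathrm{alg}}=\mathsf{lift}(\mathbf 1_V)$, $X^{(t)}_{\mathrm{alg}}$ the state after the $t$-th single-site step of (c). *)

From mathcomp Require Import all_boot all_order all_algebra.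
Set Implicit Arguments. Unset Strict Implicit. Unset Printing Implicit Defensive.
Import Order.TTheory GRing.Theory Num.Theory.
Local Open Scope ring_scope.

(* Spins of the lifted space {0,1,*}: encoded as 'I_3 with
   0 = spin 0, 1 = spin 1, 2 = spin star.  The nat order on 'I_3 is
   exactly the order 0 < 1 < star used in the paper. *)
Definition spin3 := 'I_3.
Definition s0 : spin3 := @Ordinal 3 0 isT.
Definition s1 : spin3 := @Ordinal 3 1 isT.
Definition sstar : spin3 := @Ordinal 3 2 isT.

Section Defs.
Variable R : realFieldType.
Variable V : finType.

Notation conf := {ffun V -> bool}.
Notation conf3 := {ffun V -> spin3}.

Definition upd (A : Type) (x : {ffun V -> A}) (v : V) (a : A) : {ffun V -> A} :=
  [ffun u => if u == v then a else x u].

Definition is_distr (T : finType) (p : {ffun T -> R}) : Prop :=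
  (forall x, 0 <= p x) /\ \sum_x p x = 1.

(* conditional law of the spin at v given the other spins of x
   (the value x v is ignored):  p^{x_{V\{v}}}_v (a) *)
Definition cond (A : finType) (p : {ffun {ffun V -> A} -> R}) (x : {ffun V -> A})
    (v : V) (a : A) : R :=
  p (upd x v a) / \sum_(c : A) p (upd x v c).

Definition feasible (A : finType) (p : {ffun {ffun V -> A} -> R}) (x : {ffun V -> A})
    (v : V) : Prop :=
  0 < \sum_(c : A) p (upd x v c).

Definition monotone_system (mu : {ffun conf -> R}) : Prop :=
  forall (v : V) (s t : conf),
    (forall u, u != v -> s u ==> t u) ->
    feasible mu s v -> feasible mu t v ->
    cond mu s v true <= cond mu t v true.

Definition ones : conf := [ffun _ => true].

Definition norm1 (s : conf) : nat := #|[set v | s v]|.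

Definition tilt (theta : R) (mu : {ffun conf -> R}) : {ffun conf -> R} :=
  [ffun s => mu s * theta ^+ norm1 s / \sum_(s' : conf) mu s' * theta ^+ norm1 s'].

(* single-coordinate lift probabilities: P(lift(b) = a) *)
Definition lift1 (theta : R) (b : bool) (a : spin3) : R :=
  if b then (if a == s1 then theta else if a == sstar then 1 - theta else 0)
  else (a == s0)%:R.

Definition liftP (theta : R) (x : conf) (y : conf3) : R :=
  \prod_v lift1 theta (x v) (y v).

Definition contr (y : conf3) : conf := [ffun v => y v != s0].

Definition piL (theta : R) (mu : {ffun conf -> R}) : {ffun conf3 -> R} :=
  [ffun y => \sum_(x : conf) mu x * liftP theta x y].

Definition step (T : finType) (p : {ffun T -> R}) (K : T -> T -> R) : {ffun T -> R} :=
  [ffun y => \sum_x p x * K x y].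

Definition law_lift_ones (theta : R) : {ffun conf3 -> R} :=
  [ffun y => liftP theta ones y].

Definition K_GD (theta : R) (mu : {ffun conf -> R}) (x y : conf3) : R :=
  #|V|%:R^-1 * \sum_v ((y == upd x v (y v))%:R * cond (piL theta mu) x v (y v)).

Fixpoint law_GD (theta : R) (mu : {ffun conf -> R}) (t : nat) : {ffun conf3 -> R} :=
  match t with
  | 0 => law_lift_ones theta
  | t'.+1 => step (law_GD theta mu t') (K_GD theta mu)
  end.

(* Single-site step (c) of the algorithm.  S = {v : X_v != star} is the set
   of non-star sites; it is invariant during step (c), so it is read off the
   current state. *)
Definition K_alg (theta : R) (mu : {ffun conf -> R}) (x y : conf3) : R :=
  #|V|%:R^-1 * \sum_v ((y == upd x v (y v))%:R *
     (if x v == sstar then (y v == sstar)%:R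
      else if y v == sstar then 0
      else cond (tilt theta mu) (contr x) v (y v != s0))).

(* steps (a)+(b): X <- lift(contr(X)) *)
Definition K_contr_lift (theta : R) (x y : conf3) : R := liftP theta (contr x) y.

(* law of X^{(t)}_alg, the state after the t-th single-site step of (c)
   in A_mu(theta, T1, T2); a new round (contr then lift) starts before
   single-site steps number k*T2 + 1. Meaningful for t <= T1*T2. *)
Fixpoint law_alg (theta : R) (mu : {ffun conf -> R}) (T2 t : nat) : {ffun conf3 -> R} :=
  match t with
  | 0 => law_lift_ones theta
  | t'.+1 =>
      let p := law_alg theta mu T2 t' in
      step (if (T2 %| t')%N then step p (K_contr_lift theta) else p) (K_alg theta mu)
  end.

Definition le3 (x y : conf3) : bool := [forall v, (x v <= y v)%N].

Definition sd (p q : {ffun conf3 -> R}) : Prop :=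
  exists c : {ffun conf3 * conf3 -> R},
    [/\ forall z, 0 <= c z,
        forall x, \sum_y c (x, y) = p x,
        forall y, \sum_x c (x, y) = q y &
        forall x y, c (x, y) != 0 -> le3 x y].

End Defs.

(* Three invariants are propagated along the time t, for g = law of the Glauber dynamics of pi
   and a = law of the algorithm: g is dominated by a; a has a density with respect to pi that is
   nondecreasing for 0 < 1 < star; g is the lift of a law on {0,1}^V.  Contracting and lifting
   again is a monotone kernel that fixes every lifted law and preserves nondecreasing densities.
   The Glauber kernel of pi is monotone on the support of pi because mu is monotone, so it
   preserves domination.  From a law a with nondecreasing density, one Glauber step is dominated
   by one step of the algorithm: at the chosen site the algorithm keeps a star and resamples
   0/1 from pi restricted to {0,1}, which the density condition makes stochastically larger.
   Finally, after an algorithm step the density at a non-star site is a mediant of the old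
   densities at 0 and 1, which stays monotone by the single-site form of the monotonicity of mu. *)

From mathcomp Require Import all_boot all_order all_algebra.
From mathcomp Require Import ring lra.
From Stdlib Require Import ClassicalEpsilon.
Set Implicit Arguments. Unset Strict Implicit. Unset Printing Implicit Defensive.
Import Order.TTheory GRing.Theory Num.Theory.
Local Open Scope ring_scope.

Lemma sumr_neq0_exists (R : numDomainType) (I : finType) (F : I -> R) :
  \sum_i F i != 0 -> exists i, F i != 0.
Proof.
move=> H; apply/existsP; apply: contraNT H => /existsPn F0.
by rewrite big1 // => i _; apply/eqP/negPn/F0.
Qed.

Section Couplings.
Variables (R : realFieldType) (T : finType) (r : rel T).
Implicit Types p q : T -> R.

Definition coupled p q := exists c : {ffun T * T -> R},
  [/\ forall z, 0 <= c z, forall x, \sum_y c (x, y) = p x,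
      forall y, \sum_x c (x, y) = q y & forall x y, c (x, y) != 0 -> r x y].

Lemma eq_coupled p p' q q' : p =1 p' -> q =1 q' -> coupled p q -> coupled p' q'.
Proof.
move=> ep eq [c [c0 cp cq cr]]; exists c; split=> // [x|y].
- by rewrite cp ep.
- by rewrite cq eq.
Qed.

Lemma coupled_ge0r p q : coupled p q -> forall y, 0 <= q y.
Proof. by case=> c [c0 _ cq _] y; rewrite -cq sumr_ge0. Qed.

Lemma coupling_le_margl (c : {ffun T * T -> R}) x y :
  (forall z, 0 <= c z) -> c (x, y) <= \sum_y' c (x, y').
Proof. by move=> c0; rewrite (bigD1 y) //= lerDl sumr_ge0. Qed.

Lemma coupling_le_margr (c : {ffun T * T -> R}) x y :
  (forall z, 0 <= c z) -> c (x, y) <= \sum_x' c (x', y).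
Proof. by move=> c0; rewrite (bigD1 x) //= lerDl sumr_ge0. Qed.

Lemma coupled_refl p : reflexive r -> (forall x, 0 <= p x) -> coupled p p.
Proof.
move=> rr p0; exists [ffun z => (z.1 == z.2)%:R * p z.1]; split.
- by move=> z; rewrite ffunE mulr_ge0 ?ler0n.
- move=> x; rewrite (bigD1 x) //= ffunE eqxx mul1r big1 ?addr0 // => y yx.
  by rewrite ffunE eq_sym (negbTE yx) mul0r.
- move=> y; rewrite (bigD1 y) //= ffunE eqxx mul1r big1 ?addr0 // => x xy.
  by rewrite ffunE (negbTE xy) mul0r.
- move=> x y; rewrite ffunE /=; case: (eqVneq x y) => [<- _|_]; first exact: rr.
  by rewrite mul0r eqxx.
Qed.

(* Glue the two couplings along their common marginal q. *)
Lemma coupled_trans p q s : transitive r -> coupled p q -> coupled q s -> coupled p s.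
Proof.
move=> rt cpq; have q0 := coupled_ge0r cpq.
move: cpq => [c1 [c10 c1p c1q c1r]] [c2 [c20 c2q c2s c2r]].
have c1_0 x y : q y = 0 -> c1 (x, y) = 0.
  move=> qy; apply/eqP; rewrite eq_le c10 andbT -qy -c1q.
  exact: coupling_le_margr.
have c2_0 y z : q y = 0 -> c2 (y, z) = 0.
  move=> qy; apply/eqP; rewrite eq_le c20 andbT -qy -c2q.
  exact: coupling_le_margl.
exists [ffun z => \sum_y c1 (z.1, y) * c2 (y, z.2) / q y]; split.
- by move=> z; rewrite ffunE sumr_ge0 // => y _; rewrite divr_ge0 ?mulr_ge0.
- move=> x; under eq_bigr do rewrite ffunE /=.
  rewrite exchange_big -c1p; apply: eq_bigr => y _.
  under eq_bigr do rewrite mulrAC.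
  rewrite -mulr_sumr c2q; have [qy|qy] := eqVneq (q y) 0.
    by rewrite c1_0 ?mul0r.
  by rewrite -mulrA mulVf ?mulr1.
- move=> z; under eq_bigr do rewrite ffunE /=.
  rewrite exchange_big -c2s; apply: eq_bigr => y _.
  rewrite -!mulr_suml c1q; have [qy|qy] := eqVneq (q y) 0.
    by rewrite c2_0 ?mulr0 ?mul0r.
  by rewrite mulrAC mulfV ?mul1r.
- move=> x z; rewrite ffunE /= => /sumr_neq0_exists[y].
  rewrite !mulf_eq0 !negb_or => /andP[/andP[c1n c2n] _].
  exact: rt (c1r _ _ c1n) (c2r _ _ c2n).
Qed.

Lemma coupled_mix (I : finType) (w : I -> R) (P Q : I -> T -> R) :
  (forall i, 0 <= w i) -> (forall i, w i != 0 -> coupled (P i) (Q i)) ->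
  coupled (fun x => \sum_i w i * P i x) (fun y => \sum_i w i * Q i y).
Proof.
move=> w0 cPQ.
have /choice[C HC] : forall i, exists c : {ffun T * T -> R}, w i != 0 ->
    [/\ forall z, 0 <= c z, forall x, \sum_y c (x, y) = P i x,
        forall y, \sum_x c (x, y) = Q i y & forall x y, c (x, y) != 0 -> r x y].
  move=> i; have [wi|wi] := eqVneq (w i) 0; first by exists 0.
  by have [c Hc] := cPQ i wi; exists c.
exists [ffun z => \sum_i w i * C i z]; split.
- move=> z; rewrite ffunE sumr_ge0 // => i _.
  have [->|/HC[C0 _ _ _]] := eqVneq (w i) 0; first by rewrite mul0r.
  by rewrite mulr_ge0.
- move=> x; under eq_bigr do rewrite ffunE.
  rewrite exchange_big; apply: eq_bigr => i _; rewrite -mulr_sumr.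
  by have [->|/HC[_ -> _ _]] := eqVneq (w i) 0; rewrite ?mul0r.
- move=> y; under eq_bigr do rewrite ffunE.
  rewrite exchange_big; apply: eq_bigr => i _; rewrite -mulr_sumr.
  by have [->|/HC[_ _ -> _]] := eqVneq (w i) 0; rewrite ?mul0r.
- move=> x y; rewrite ffunE => /sumr_neq0_exists[i]; rewrite mulf_eq0 negb_or.
  by case/andP=> wi Ci; case: (HC i wi) => _ _ _; apply.
Qed.

Lemma coupled_kernel p q (K K' : T -> T -> R) :
  coupled p q -> (forall x y, r x y -> 0 < p x -> 0 < q y -> coupled (K x) (K' y)) ->
  coupled (fun z => \sum_x p x * K x z) (fun z => \sum_y q y * K' y z).
Proof.
move=> [c [c0 cp cq cr]] cK.
apply: (eq_coupled _ _ (coupled_mix (P := fun i => K i.1) (Q := fun i => K' i.2) c0 _)).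
- move=> z; rewrite (eq_bigr (fun i => c (i.1, i.2) * K i.1 z)) => [|[] //].
  rewrite -(pair_bigA _ (fun x y => c (x, y) * K x z)) /=.
  by apply: eq_bigr => x _; rewrite -mulr_suml cp.
- move=> z; rewrite (eq_bigr (fun i => c (i.1, i.2) * K' i.2 z)) => [|[] //].
  rewrite -(pair_bigA _ (fun x y => c (x, y) * K' y z)) exchange_big /=.
  by apply: eq_bigr => y _; rewrite -mulr_suml cq.
- move=> [x y] cxy; have cpos : 0 < c (x, y) by rewrite lt0r cxy c0.
  apply: cK; first exact: cr.
  + by rewrite -cp (lt_le_trans cpos) ?coupling_le_margl.
  + by rewrite -cq (lt_le_trans cpos) ?coupling_le_margr.
Qed.

Lemma coupled_sum_le p q (f : T -> R) : coupled p q ->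
  (forall x y, r x y -> 0 < p x -> 0 < q y -> f x <= f y) ->
  \sum_x p x * f x <= \sum_y q y * f y.
Proof.
move=> [c [c0 cp cq cr]] fr.
under eq_bigr do rewrite -cp mulr_suml.
under [X in _ <= X]eq_bigr do rewrite -cq mulr_suml.
rewrite [X in _ <= X]exchange_big; apply: ler_sum => x _; apply: ler_sum => y _.
have [->|cxy] := eqVneq (c (x, y)) 0; first by rewrite !mul0r.
have cpos : 0 < c (x, y) by rewrite lt0r cxy c0.
rewrite ler_wpM2l ?c0 // fr ?cr //.
- by rewrite -cp (lt_le_trans cpos) ?coupling_le_margl.
- by rewrite -cq (lt_le_trans cpos) ?coupling_le_margr.
Qed.

End Couplings.

Section IncreasingDensity.
Variables (R : realFieldType) (T : finType) (r : rel T) (p : T -> R).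
Implicit Types q : T -> R.

Definition increasing_density q := [/\ forall x, 0 <= q x, forall x, p x = 0 -> q x = 0 &
  forall x y, r x y -> q x * p y <= q y * p x].

Lemma eq_increasing_density q q' : q =1 q' -> increasing_density q -> increasing_density q'.
Proof. by move=> e [q0 qp qr]; split=> [x|x|x y]; rewrite -?e; [exact: q0|exact: qp|exact: qr]. Qed.

Lemma increasing_density_mix (I : finType) (w : I -> R) (Q : I -> T -> R) :
  (forall i, 0 <= w i) -> (forall i, increasing_density (Q i)) ->
  increasing_density (fun x => \sum_i w i * Q i x).
Proof.
move=> w0 HQ; split=> [x|x px|x y xy].
- by rewrite sumr_ge0 // => i _; case: (HQ i) => Q0 _ _; rewrite mulr_ge0.
- by rewrite big1 // => i _; case: (HQ i) => _ -> //; rewrite mulr0.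
- rewrite !mulr_suml; apply: ler_sum => i _; rewrite -!mulrA ler_wpM2l //.
  by case: (HQ i) => _ _; apply.
Qed.

Lemma increasing_density_gt0 q x : (forall y, 0 <= p y) -> increasing_density q ->
  0 < q x -> 0 < p x.
Proof.
move=> p0 [_ qp _] qx; rewrite lt0r p0 andbT; apply: contraTneq qx => /qp ->.
by rewrite ltxx.
Qed.

End IncreasingDensity.

Section Updates.
Variables (V : finType) (A : eqType).
Implicit Types (x z : {ffun V -> A}) (v : V) (a b : A).

Lemma updE x v a u : upd x v a u = if u == v then a else x u.
Proof. by rewrite ffunE. Qed.

Lemma upd_same x v a : upd x v a v = a.
Proof. by rewrite updE eqxx. Qed.

Lemma upd_upd x v a b : upd (upd x v a) v b = upd x v b.
Proof. by apply/ffunP => u; rewrite !updE; case: eqP. Qed.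

Lemma upd_id x v : upd x v (x v) = x.
Proof. by apply/ffunP => u; rewrite updE; case: eqP => // ->. Qed.

Lemma eq_upd_sym x z v : (z == upd x v (z v)) = (x == upd z v (x v)).
Proof.
by apply/eqP/eqP => e; apply/ffunP => u; rewrite updE; case: eqP => [->|/eqP uv] //;
  rewrite e updE (negbTE uv).
Qed.

End Updates.

Section SumUpdates.
Variables (R : realFieldType) (V A : finType).
Implicit Types (x z : {ffun V -> A}).

Lemma sum_fiber x v (F : {ffun V -> A} -> R) :
  \sum_(z : {ffun V -> A}) (z == upd x v (z v))%:R * F z = \sum_a F (upd x v a).
Proof.
transitivity (\sum_a \sum_(z : {ffun V -> A}) (z == upd x v a)%:R * F z); last first.
  apply: eq_bigr => a _; rewrite (bigD1 (upd x v a)) //= eqxx mul1r big1 ?addr0 //.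
  by move=> z /negbTE ->; rewrite mul0r.
rewrite exchange_big; apply: eq_bigr => z _; rewrite -mulr_suml.
congr (_ * _); rewrite (bigD1 (z v)) //= big1 ?addr0 // => a az.
by case: eqP => // ze; move: az; rewrite ze upd_same eqxx.
Qed.

Lemma sum_fiber_sym z v (F : {ffun V -> A} -> R) :
  \sum_(x : {ffun V -> A}) (z == upd x v (z v))%:R * F x = \sum_a F (upd z v a).
Proof. under eq_bigr do rewrite eq_upd_sym; exact: sum_fiber. Qed.

End SumUpdates.

Section SiteKernels.
Variables (R : realFieldType) (V A : finType).
Local Notation conf := {ffun V -> A}.

Definition site_kernel (f : conf -> V -> A -> R) v (x z : conf) : R :=
  (z == upd x v (z v))%:R * f x v (z v).

Lemma step_site_kernel (q : {ffun conf -> R}) f v z :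
  step q (site_kernel f v) z = \sum_a q (upd z v a) * f (upd z v a) v (z v).
Proof.
by rewrite ffunE; under eq_bigr do rewrite /site_kernel mulrCA; rewrite sum_fiber_sym.
Qed.

Lemma step_avg (T I : finType) (q : {ffun T -> R}) (k : R) (F : I -> T -> T -> R) z :
  step q (fun x y => k * \sum_i F i x y) z = \sum_i k * step q (F i) z.
Proof.
rewrite !ffunE; under eq_bigr do rewrite mulr_sumr mulr_sumr.
by rewrite exchange_big; apply: eq_bigr => i _; rewrite ffunE mulr_sumr;
  apply: eq_bigr => x _; rewrite mulrCA.
Qed.

Lemma cond_upd (p : {ffun conf -> R}) x v a b : cond p (upd x v a) v b = cond p x v b.
Proof. by rewrite /cond upd_upd; under eq_bigr do rewrite upd_upd. Qed.

Lemma step_site_cond (p q : {ffun conf -> R}) v z :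
  step q (site_kernel (cond p) v) z = (\sum_a q (upd z v a)) * cond p z v (z v).
Proof. by rewrite step_site_kernel mulr_suml; under eq_bigr do rewrite cond_upd. Qed.

End SiteKernels.

Section FfunCouplings.
Variables (R : realFieldType) (V A : finType) (r : rel A).
Implicit Types (x y z : {ffun V -> A}).

Definition ffun_rel : rel {ffun V -> A} := fun x y => [forall v, r (x v) (y v)].

Lemma ffun_rel_refl : reflexive r -> reflexive ffun_rel.
Proof. by move=> rr x; apply/forallP => v. Qed.

Lemma ffun_rel_trans : transitive r -> transitive ffun_rel.
Proof.
move=> rt y x z /forallP xy /forallP yz; apply/forallP => v; exact: rt (xy v) (yz v).
Qed.

Lemma coupled_prod (P Q : V -> A -> R) : (forall v, coupled r (P v) (Q v)) ->
  coupled ffun_rel (fun x => \prod_v P v (x v)) (fun y => \prod_v Q v (y v)).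
Proof.
move=> /choice[C HC].
pose c := [ffun z : {ffun V -> A} * {ffun V -> A} => \prod_v C v (z.1 v, z.2 v)].
have cE x y : c (x, y) = \prod_v C v (x v, y v) by rewrite ffunE.
exists c; split.
- by move=> z; rewrite ffunE prodr_ge0 // => v _; case: (HC v).
- move=> x; rewrite (eq_bigr (fun y => \prod_v C v (x v, y v))) => [|y _]; last exact: cE.
  rewrite -(bigA_distr_bigA (fun v b => C v (x v, b))).
  by apply: eq_bigr => v _; case: (HC v).
- move=> y; rewrite (eq_bigr (fun x => \prod_v C v (x v, y v))) => [|x _]; last exact: cE.
  rewrite -(bigA_distr_bigA (fun v a => C v (a, y v))).
  by apply: eq_bigr => v _; case: (HC v).
- move=> x y; rewrite cE => Cxy; apply/forallP => v.
  case: (HC v) => _ _ _; apply.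
  by move: Cxy; rewrite (bigD1 v) //= mulf_eq0 negb_or => /andP[].
Qed.

Lemma coupled_upd x y v (al be : A -> R) :
  (forall u, u != v -> r (x u) (y u)) -> coupled r al be ->
  coupled ffun_rel (fun z => (z == upd x v (z v))%:R * al (z v))
                   (fun z => (z == upd y v (z v))%:R * be (z v)).
Proof.
move=> rxy [g [g0 ga gb gr]].
exists [ffun z : {ffun V -> A} * {ffun V -> A} =>
  (z.1 == upd x v (z.1 v))%:R * (z.2 == upd y v (z.2 v))%:R * g (z.1 v, z.2 v)].
split.
- by move=> z; rewrite ffunE !mulr_ge0 ?ler0n.
- move=> z; under eq_bigr do rewrite ffunE /= -mulrA.
  by rewrite -mulr_sumr sum_fiber; under eq_bigr do rewrite upd_same; rewrite ga.
- move=> z; under eq_bigr do rewrite ffunE /= mulrAC.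
  by rewrite -mulr_suml sum_fiber; under eq_bigr do rewrite upd_same; rewrite gb mulrC.
- move=> z z'; rewrite ffunE /= !mulf_eq0 !negb_or !pnatr_eq0 !eqb0 !negbK.
  case/andP=> [/andP[/eqP zE /eqP z'E] gzz]; apply/forallP => u.
  rewrite zE z'E !updE; case: eqP => [_|/eqP]; [exact: gr | exact: rxy].
Qed.

Lemma coupled_fiber v (p q : {ffun V -> A} -> R) : reflexive r ->
  (forall w, coupled r (fun a => p (upd w v a)) (fun b => q (upd w v b))) ->
  coupled ffun_rel p q.
Proof.
move=> rr /choice[G HG]; have [a0 _|A0] := pickP (@predT A); last first.
  by exists 0; split=> [z|x|x|x y]; rewrite ?ffunE //; have := A0 (x v).
exists [ffun z : {ffun V -> A} * {ffun V -> A} =>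
  (z.2 == upd z.1 v (z.2 v))%:R * G (upd z.1 v a0) (z.1 v, z.2 v)].
split.
- by move=> z; rewrite ffunE mulr_ge0 ?ler0n //; case: (HG (upd z.1 v a0)).
- move=> x; under eq_bigr do rewrite ffunE /=.
  rewrite sum_fiber; under eq_bigr do rewrite upd_same.
  by case: (HG (upd x v a0)) => _ -> _ _; rewrite upd_upd upd_id.
- move=> y; under eq_bigr do rewrite ffunE /= eq_upd_sym.
  rewrite sum_fiber; under eq_bigr do rewrite upd_same upd_upd.
  by case: (HG (upd y v a0)) => _ _ -> _; rewrite upd_upd upd_id.
- move=> x y; rewrite ffunE /= mulf_eq0 negb_or pnatr_eq0 eqb0 negbK.
  case/andP=> /eqP yE Gxy; apply/forallP => u; rewrite yE updE.
  case: eqP => [->|_]; last exact: rr.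
  by move: Gxy; case: (HG (upd x v a0)) => _ _ _; apply.
Qed.

End FfunCouplings.

Definition spin_le : rel spin3 := fun a b => (a <= b)%N.

Lemma le3_refl (V : finType) : reflexive (@le3 V).
Proof. exact: (@ffun_rel_refl V _ spin_le (fun a => leqnn a)). Qed.

Lemma le3_trans (V : finType) : transitive (@le3 V).
Proof. exact: (@ffun_rel_trans V _ spin_le (fun b a c => @leq_trans b a c)). Qed.

Lemma spin3P (a : spin3) : [\/ a = s0, a = s1 | a = sstar].
Proof.
case: a => [[|[|[|//]]] ?]; [constructor 1|constructor 2|constructor 3]; exact: val_inj.
Qed.

Section Spin3Couplings.
Variable R : realFieldType.
Implicit Types X Y al be : spin3 -> R.

Lemma sum_spin3 (F : spin3 -> R) : \sum_a F a = F s0 + F s1 + F sstar.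
Proof.
rewrite !big_ord_recr big_ord0 /= add0r.
by congr (F _ + F _ + F _); apply: val_inj.
Qed.

Lemma spin3_coupled al be :
  (forall a, 0 <= al a) -> (forall b, 0 <= be b) -> \sum_a al a = \sum_b be b ->
  al sstar <= be sstar -> al s1 + al sstar <= be s1 + be sstar ->
  coupled spin_le al be.
Proof.
move=> al0 be0; rewrite !sum_spin3 => mass tail2 tail1.
pose m := Num.min (al s1) (be s1).
have m1 : m <= al s1 by rewrite ge_min lexx.
have m2 : m <= be s1 by rewrite ge_min lexx orbT.
have m3 : m = al s1 \/ m = be s1 by rewrite /m; case: leP; [left|right].
pose g (a b : spin3) :=
  if a == s0 then (if b == s0 then be s0 else if b == s1 then be s1 - m
                   else al s0 - be s0 - be s1 + m)
  else if a == s1 then (if b == s0 then 0 else if b == s1 then m else al s1 - m)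
  else (if b == sstar then al sstar else 0).
have := al0 s0; have := al0 s1; have := al0 sstar.
have := be0 s0; have := be0 s1; have := be0 sstar => *.
exists [ffun ab => g ab.1 ab.2]; split.
- by move=> [a b]; rewrite ffunE /g; case: (spin3P a) => ->; case: (spin3P b) => -> /=; lra.
- by move=> a; rewrite sum_spin3 !ffunE /g; case: (spin3P a) => -> /=; lra.
- by move=> b; rewrite sum_spin3 !ffunE /g; case: (spin3P b) => -> /=; lra.
- by move=> a b; rewrite ffunE /g; case: (spin3P a) => ->; case: (spin3P b) => -> //=;
    rewrite eqxx.
Qed.

Lemma spin3_coupled_cross X Y c :
  (forall a, 0 <= X a) -> (forall a, 0 <= Y a) -> 0 <= c ->
  X sstar = c * X s1 -> Y sstar = c * Y s1 -> X s1 * Y s0 <= X s0 * Y s1 ->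
  0 < \sum_a X a -> 0 < \sum_a Y a ->
  coupled spin_le (fun a => X a / \sum_b X b) (fun a => Y a / \sum_b Y b).
Proof.
move=> X0 Y0 c0 X2 Y2 cross; rewrite !sum_spin3 => SX SY.
apply: spin3_coupled => [a|a||/=|/=]; rewrite ?sum_spin3.
- by rewrite divr_ge0 // ltW.
- by rewrite divr_ge0 // ltW.
- by rewrite -!mulrDl !divff ?gt_eqF.
- by rewrite ler_pdivrMr // mulrAC ler_pdivlMr // X2 Y2; nra.
- by rewrite -!mulrDl ler_pdivrMr // mulrAC ler_pdivlMr // X2 Y2; nra.
Qed.

Lemma spin3_coupled_resample X Q :
  (forall a, 0 <= X a) -> (forall a, 0 <= Q a) -> (forall a, X a = 0 -> Q a = 0) ->
  Q s0 * X sstar <= Q sstar * X s0 -> Q s1 * X sstar <= Q sstar * X s1 ->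
  coupled spin_le (fun a => (\sum_b Q b) * (X a / \sum_b X b))
    (fun a => if a == sstar then Q sstar else (Q s0 + Q s1) * (X a / (X s0 + X s1))).
Proof.
move=> Xge0 Qge0 XQ0 cmp0 cmp1.
move: (Xge0 s0) (Xge0 s1) (Xge0 sstar) (Qge0 s0) (Qge0 s1) (Qge0 sstar).
move=> X_0 X_1 X_2 Q_0 Q_1 Q_2.
have spin_le_refl : reflexive spin_le by move=> a; exact: leqnn.
have [T0|Tpos] : X s0 + X s1 = 0 \/ 0 < X s0 + X s1.
  by case: (ltgtP (X s0 + X s1) 0) => h; [lra|right|left].
  have [x0 x1] : X s0 = 0 /\ X s1 = 0 by lra.
  move: (XQ0 _ x0) (XQ0 _ x1) => q0 q1.
  apply: (eq_coupled _ _ (coupled_refl (p := fun a => (a == sstar)%:R * Q sstar) _ _)).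
  - move=> a; rewrite !sum_spin3 x0 x1 q0 q1 !add0r.
    have [x2|x2] := eqVneq (X sstar) 0; first by rewrite (XQ0 _ x2) !mulr0 !mul0r.
    by case: (spin3P a) => -> /=; rewrite ?x0 ?x1 ?mul0r ?mul1r ?mulr0 ?(divff x2) ?mulr1.
  - by move=> a; case: (spin3P a) => -> /=; rewrite ?x0 ?x1 ?q0 ?q1 ?addr0 ?mul0r ?mul1r.
  - exact: spin_le_refl.
  - by move=> a; rewrite mulr_ge0 ?ler0n.
rewrite !sum_spin3; have Ppos : 0 < X s0 + X s1 + X sstar by lra.
apply: spin3_coupled => [a|a||/=|/=].
- by rewrite !mulr_ge0 ?addr_ge0 ?invr_ge0 // ltW.
- by case: ifP => // _; rewrite !mulr_ge0 ?addr_ge0 ?invr_ge0 // ltW.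
- by rewrite !sum_spin3 /=; field; rewrite !gt_eqF.
- by rewrite mulrA ler_pdivrMr //; nra.
- rewrite -mulrDr -mulrDl mulrA ler_pdivrMr // -subr_ge0.
  set d := (X in 0 <= X).
  have -> : d = X s0 * (Q sstar * (X s0 + X s1) - (Q s0 + Q s1) * X sstar) / (X s0 + X s1).
    by rewrite /d; field; rewrite gt_eqF.
  by rewrite divr_ge0 ?(ltW Tpos) // mulr_ge0 // subr_ge0; nra.
Qed.

End Spin3Couplings.

(* In ratio form: if a_i / X_i <= b_j / Y_j for i <= j and X1 / X0 <= Y1 / Y0, then
   (a0 + a1) / (X0 + X1) <= (b0 + b1) / (Y0 + Y1).  Cross-multiplied, zero weights are allowed. *)
Lemma mediant_le (R : realFieldType) (X0 X1 Y0 Y1 a0 a1 b0 b1 : R) :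
  0 <= X0 -> 0 <= X1 -> 0 <= Y0 -> 0 <= Y1 -> 0 <= b1 ->
  (X1 = 0 -> a1 = 0) -> (Y0 = 0 -> b0 = 0) ->
  a0 * Y0 <= b0 * X0 -> a0 * Y1 <= b1 * X0 -> a1 * Y1 <= b1 * X1 -> X1 * Y0 <= X0 * Y1 ->
  (a0 + a1) * (Y0 + Y1) <= (b0 + b1) * (X0 + X1).
Proof.
move=> X0ge0 X1ge0 Y0ge0 Y1ge0 b1ge0 X1a1 Y0b0 h00 h01 h11 cross.
rewrite -subr_ge0; set G := (X in 0 <= X).
have key : X0 * Y1 * G = X0 * Y1 * (b0 * X0 - a0 * Y0) + X0 * Y1 * (b1 * X1 - a1 * Y1)
    + X1 * Y1 * (b0 * X0 - a0 * Y0) + X0 * Y0 * (b1 * X1 - a1 * Y1)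
    + (X0 * Y1 - X1 * Y0) * (b1 * X0 - a0 * Y1) by rewrite /G; ring.
have [XY0|XYpos] := eqVneq (X0 * Y1) 0; last first.
  have XYgt0 : 0 < X0 * Y1 by rewrite lt0r XYpos mulr_ge0.
  rewrite -(pmulr_rge0 _ XYgt0) key.
  by rewrite !addr_ge0 ?mulr_ge0 ?subr_ge0.
have [X1_0|X1_pos] := eqVneq X1 0; first by rewrite /G X1_0 (X1a1 X1_0); nra.
have [Y0_0|Y0_pos] := eqVneq Y0 0; first by rewrite /G Y0_0 (Y0b0 Y0_0); nra.
nra.
Qed.

Section Lift.
Variables (R : realFieldType) (V : finType) (th : R).
Hypotheses (th_gt0 : 0 < th) (th_lt1 : th < 1).
Local Notation conf := {ffun V -> bool}.
Local Notation conf3 := {ffun V -> spin3}.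
Implicit Types (s : conf) (x y z : conf3).

Let th_ge0 : 0 <= th. Proof. exact: ltW. Qed.
Let th_le1 : 0 <= 1 - th. Proof. by rewrite subr_ge0 ltW. Qed.

Lemma lift1_ge0 b a : 0 <= lift1 th b a.
Proof. by rewrite /lift1; case: b; case: (spin3P a) => -> /=; rewrite ?ler0n. Qed.

Lemma lift1_contr_gt0 a : 0 < lift1 th (a != s0) a.
Proof. by rewrite /lift1; case: (spin3P a) => -> /=; rewrite ?ltr01 ?subr_gt0. Qed.

Lemma lift1_eq0 b a : b != (a != s0) -> lift1 th b a = 0.
Proof. by rewrite /lift1; case: b; case: (spin3P a) => -> /=. Qed.

Lemma sum_lift1 b : \sum_a lift1 th b a = 1.
Proof. by rewrite sum_spin3 /lift1; case: b => /=; ring. Qed.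

Lemma coupled_lift1 b b' : b ==> b' -> coupled spin_le (lift1 th b) (lift1 th b').
Proof.
move=> bb'; apply: spin3_coupled => [a|a||/=|/=]; rewrite ?lift1_ge0 ?sum_lift1 //.
all: by case: b b' bb' => [] [] // _; rewrite /lift1 /= add0r addr_ge0.
Qed.

Lemma liftP_ge0 s y : 0 <= liftP th s y.
Proof. exact/prodr_ge0/(fun v _ => lift1_ge0 _ _). Qed.

Lemma liftP_contr_gt0 y : 0 < liftP th (contr y) y.
Proof. by apply: prodr_gt0 => v _; rewrite ffunE lift1_contr_gt0. Qed.

Lemma liftP_eq0 s y : s != contr y -> liftP th s y = 0.
Proof.
move=> ne; apply/eqP; apply: contraNT ne => lP; apply/eqP/ffunP => v.
apply/eqP; apply: contraNT lP => sv; rewrite ffunE in sv.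
by rewrite /liftP (bigD1 v) //= lift1_eq0 ?mul0r.
Qed.

Lemma sum_liftP s : \sum_y liftP th s y = 1.
Proof.
rewrite /liftP -(bigA_distr_bigA (fun v a => lift1 th (s v) a)) /=.
by rewrite big1 // => v _; rewrite sum_lift1.
Qed.

Lemma coupled_liftP s s' : ffun_rel implb s s' -> coupled (@le3 V) (liftP th s) (liftP th s').
Proof. by move=> /forallP ss'; exact: (coupled_prod (fun v => coupled_lift1 (ss' v))). Qed.

Lemma contr_upd y v a : contr (upd y v a) = upd (contr y) v (a != s0).
Proof. by apply/ffunP => u; rewrite !ffunE; case: ifP. Qed.

Lemma upd_contr_id z v : upd (contr z) v (z v != s0) = contr z.
Proof. by rewrite -contr_upd upd_id. Qed.

Lemma le3_contr x y : le3 x y -> ffun_rel implb (contr x) (contr y).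
Proof.
move=> /forallP xy; apply/forallP => v; rewrite !ffunE; move: (xy v).
by case: (spin3P (x v)) => ->; case: (spin3P (y v)) => ->.
Qed.

Definition rest_weight z v := \prod_(u | u != v) lift1 th (contr z u) (z u).

Lemma rest_weight_gt0 z v : 0 < rest_weight z v.
Proof. by apply: prodr_gt0 => u _; rewrite ffunE lift1_contr_gt0. Qed.

Definition lift_law (F : conf -> R) z := liftP th (contr z) z * F (contr z).

Lemma lift_lawE (F : conf -> R) z : \sum_s F s * liftP th s z = lift_law F z.
Proof.
rewrite (bigD1 (contr z)) //= big1 ?addr0 1?mulrC // => s ne.
by rewrite liftP_eq0 ?mulr0.
Qed.

Lemma lift_law_upd (F : conf -> R) z v a : lift_law F (upd z v a) =
  lift1 th (a != s0) a * rest_weight z v * F (upd (contr z) v (a != s0)).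
Proof.
rewrite /lift_law /liftP (bigD1 v) //= contr_upd !upd_same; congr (_ * _ * _).
by apply: eq_bigr => u /negbTE uv; rewrite !ffunE uv.
Qed.

Lemma sum_lift_law_upd (F : conf -> R) z v : \sum_a lift_law F (upd z v a) =
  rest_weight z v * (F (upd (contr z) v false) + F (upd (contr z) v true)).
Proof. by rewrite sum_spin3 !lift_law_upd /lift1 /=; ring. Qed.

End Lift.

Lemma sdE (R : realFieldType) (V : finType) (p q : {ffun {ffun V -> spin3} -> R}) :
  sd p q = coupled (ffun_rel spin_le) p q.
Proof. by []. Qed.

Lemma le3E (V : finType) : @le3 V = ffun_rel spin_le.
Proof. by []. Qed.

Lemma sd_trans (R : realFieldType) (V : finType) (p q s : {ffun {ffun V -> spin3} -> R}) :
  sd p q -> sd q s -> sd p s.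
Proof. by rewrite !sdE; apply: coupled_trans; rewrite -le3E; exact: le3_trans. Qed.

Lemma sd_refl (R : realFieldType) (V : finType) (p : {ffun {ffun V -> spin3} -> R}) :
  (forall x, 0 <= p x) -> sd p p.
Proof. by move=> p0; rewrite sdE; apply: coupled_refl => //; rewrite -le3E; exact: le3_refl. Qed.

Lemma sd_step (R : realFieldType) (V : finType) (p q : {ffun {ffun V -> spin3} -> R}) K K' :
  sd p q -> (forall x y, le3 x y -> 0 < p x -> 0 < q y -> coupled (@le3 V) (K x) (K' y)) ->
  sd (step p K) (step q K').
Proof.
rewrite !sdE -le3E => pq KK'.
by apply: eq_coupled (coupled_kernel pq KK') => z; rewrite ffunE.
Qed.

Section Glauber.
Variables (R : realFieldType) (V : finType) (th : R) (mu : {ffun {ffun V -> bool} -> R}).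
Hypotheses (th_gt0 : 0 < th) (th_lt1 : th < 1).
Hypotheses (mu_ge0 : forall s, 0 <= mu s) (mu_ones : 0 < mu (ones V)).
Hypothesis mu_mono : monotone_system mu.
Local Notation conf := {ffun V -> bool}.
Local Notation conf3 := {ffun V -> spin3}.
Local Notation pi := (piL th mu).
Implicit Types (s : conf) (x y z : conf3) (q : {ffun conf3 -> R}).

Lemma piE y : pi y = lift_law th mu y.
Proof. by rewrite ffunE lift_lawE. Qed.

Lemma pi_ge0 y : 0 <= pi y.
Proof. by rewrite piE mulr_ge0 ?liftP_ge0 // ltW. Qed.

Lemma pi_eq0 y : (pi y == 0) = (mu (contr y) == 0).
Proof. by rewrite piE mulf_eq0 gt_eqF ?liftP_contr_gt0. Qed.

Lemma pi_gt0 y : 0 < mu (contr y) -> 0 < pi y.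
Proof. by move=> m; rewrite piE; apply: mulr_gt0 => //; exact: liftP_contr_gt0. Qed.

Lemma pi_upd z v a : pi (upd z v a) =
  lift1 th (a != s0) a * rest_weight th z v * mu (upd (contr z) v (a != s0)).
Proof. by rewrite piE lift_law_upd. Qed.

Lemma pi_upd_star z v : pi (upd z v sstar) = (1 - th) / th * pi (upd z v s1).
Proof. by rewrite !pi_upd /lift1 /=; field; rewrite gt_eqF. Qed.

Lemma sum_pi_upd_gt0 x v : 0 < pi x -> 0 < \sum_a pi (upd x v a).
Proof.
move=> px; rewrite (bigD1 (x v)) //= upd_id ltr_pwDl // sumr_ge0 // => a _.
exact: pi_ge0.
Qed.

Lemma feasible_contr x v : 0 < pi x -> feasible mu (contr x) v.
Proof.
rewrite /feasible lt0r pi_eq0 => /andP[mx _].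
rewrite (bigD1 (x v != s0)) //= upd_contr_id ltr_pwDl ?sumr_ge0 //.
by rewrite lt0r mx mu_ge0.
Qed.

(* The monotonicity of mu, read off the lifted weights at a single site. *)
Lemma pi_cross x y v : le3 x y -> 0 < pi x -> 0 < pi y ->
  pi (upd x v s1) * pi (upd y v s0) <= pi (upd x v s0) * pi (upd y v s1).
Proof.
move=> xy px py.
have := mu_mono (fun u _ => forallP (le3_contr xy) u) (feasible_contr v px) (feasible_contr v py).
move: (feasible_contr v px) (feasible_contr v py); rewrite /feasible /cond !big_bool /=.
rewrite !pi_upd /lift1 /=.
move: (rest_weight_gt0 th_gt0 th_lt1 x v) (rest_weight_gt0 th_gt0 th_lt1 y v).
set Cx := rest_weight _ x v; set Cy := rest_weight _ y v.
set x0 := mu (upd (contr x) v false); set x1 := mu (upd (contr x) v true).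
set y0 := mu (upd (contr y) v false); set y1 := mu (upd (contr y) v true).
move=> Cx0 Cy0 Sx Sy; rewrite ler_pdivrMr // mulrAC ler_pdivlMr // => mono.
have cross : x1 * y0 <= x0 * y1 by nra.
have -> : th * Cx * x1 * (1 * Cy * y0) = th * Cx * Cy * (x1 * y0) by ring.
have -> : 1 * Cx * x0 * (th * Cy * y1) = th * Cx * Cy * (x0 * y1) by ring.
by rewrite ler_wpM2l // !mulr_ge0 // ltW.
Qed.

Lemma norm1_upd s v : norm1 (upd s v true) = (norm1 (upd s v false)).+1.
Proof.
rewrite /norm1 (_ : [set u | upd s v true u] = v |: [set u | upd s v false u]).
  by rewrite cardsU1 inE upd_same.
by apply/setP => u; rewrite !inE !updE; case: eqP.
Qed.

Lemma tilt_norm_gt0 : 0 < \sum_s mu s * th ^+ norm1 s.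
Proof.
rewrite (bigD1 (ones V)) //= ltr_pwDl ?mulr_gt0 ?exprn_gt0 // sumr_ge0 // => s _.
by rewrite mulr_ge0 // exprn_ge0 // ltW.
Qed.

Lemma cond_tiltE s v b : cond (tilt th mu) s v b =
  (if b then th else 1) * mu (upd s v b) / (mu (upd s v false) + th * mu (upd s v true)).
Proof.
pose K := th ^+ norm1 (upd s v false) / \sum_s mu s * th ^+ norm1 s.
have K_gt0 : 0 < K by rewrite divr_gt0 ?exprn_gt0 ?tilt_norm_gt0.
have tiltK c : tilt th mu (upd s v c) = (if c then th else 1) * mu (upd s v c) * K.
  by rewrite ffunE /K; case: c; rewrite ?norm1_upd ?exprS /=; ring.
rewrite /cond big_bool !tiltK /= mul1r -mulrDl addrC.
have [m0|m0] := eqVneq (mu (upd s v false) + th * mu (upd s v true)) 0.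
  by rewrite m0 mul0r !invr0 !mulr0.
by field; rewrite m0 gt_eqF.
Qed.

Lemma cond_tilt_site z v : z v != sstar ->
  cond (tilt th mu) (contr z) v (z v != s0) = pi z / (pi (upd z v s0) + pi (upd z v s1)).
Proof.
move=> zs; rewrite cond_tiltE -[pi z](congr1 pi (upd_id z v)) !pi_upd upd_contr_id /=.
have C_gt0 := rest_weight_gt0 th_gt0 th_lt1 z v.
set C := rest_weight _ z v; set m0 := mu (upd _ v false); set m1 := mu (upd _ v true).
rewrite (_ : 1 * C * m0 + th * C * m1 = C * (m0 + th * m1)); last by ring.
have [->|m] := eqVneq (m0 + th * m1) 0; first by rewrite mulr0 !invr0 !mulr0.
by case: (spin3P (z v)) zs => -> //= _; rewrite /lift1 /=; field; rewrite m gt_eqF.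
Qed.

Lemma le3_upd x y v a b : le3 x y -> spin_le a b -> le3 (upd x v a) (upd y v b).
Proof. by move=> /forallP xy ab; apply/forallP => u; rewrite !updE; case: eqP. Qed.

Lemma coupled_GD_kernel x y : le3 x y -> 0 < pi x -> 0 < pi y ->
  coupled (@le3 V) (K_GD th mu x) (K_GD th mu y).
Proof.
move=> xy px py; rewrite le3E.
apply: (eq_coupled _ _ (coupled_mix (w := fun=> #|V|%:R^-1)
  (P := fun v => site_kernel (cond pi) v x) (Q := fun v => site_kernel (cond pi) v y) _ _)).
- by move=> z; rewrite /K_GD mulr_sumr.
- by move=> z; rewrite /K_GD mulr_sumr.
- by move=> v; rewrite invr_ge0 ler0n.
move=> v _; apply: coupled_upd => [u _|]; first exact: (forallP xy u).
apply: (spin3_coupled_cross (c := (1 - th) / th)) => [a|a||||||];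
  rewrite ?pi_ge0 ?pi_upd_star ?sum_pi_upd_gt0 ?pi_cross //.
by rewrite divr_ge0 ?subr_ge0 ?ltW.
Qed.

Definition alg_site_law x v b : R :=
  if x v == sstar then (b == sstar)%:R
  else if b == sstar then 0 else cond (tilt th mu) (contr x) v (b != s0).

Lemma step_alg_site (q : {ffun conf3 -> R}) v z : step q (site_kernel alg_site_law v) z =
  if z v == sstar then q z
  else (q (upd z v s0) + q (upd z v s1)) * (pi z / (pi (upd z v s0) + pi (upd z v s1))).
Proof.
rewrite step_site_kernel sum_spin3 /alg_site_law !upd_same !contr_upd !cond_upd /=.
case: (spin3P (z v)) => zv; rewrite zv /= ?mulr0 ?mulr1 ?add0r ?addr0; last by rewrite -zv upd_id.
all: by rewrite -mulrDl -cond_tilt_site zv.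
Qed.

Local Notation incr := (increasing_density (@le3 V) pi).

Lemma sd_GD_alg_step (q : {ffun conf3 -> R}) : incr q ->
  sd (step q (K_GD th mu)) (step q (K_alg th mu)).
Proof.
case=> q0 qpi qr; rewrite sdE.
apply: (eq_coupled _ _ (coupled_mix (w := fun=> #|V|%:R^-1)
  (P := fun v => step q (site_kernel (cond pi) v))
  (Q := fun v => step q (site_kernel alg_site_law v)) _ _)).
- by move=> z; rewrite [RHS]step_avg.
- by move=> z; rewrite [RHS]step_avg.
- by move=> v; rewrite invr_ge0 ler0n.
move=> v _; apply: (coupled_fiber (r := spin_le) (v := v) (fun a => leqnn a)) => w.
apply: (eq_coupled _ _ (spin3_coupled_resample
  (X := fun a => pi (upd w v a)) (Q := fun a => q (upd w v a)) _ _ _ _ _)).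
- move=> a; rewrite step_site_cond upd_same cond_upd.
  by congr (_ * _); apply: eq_bigr => b _; rewrite upd_upd.
- by move=> b; rewrite step_alg_site upd_same !upd_upd; case: eqP => // ->.
- by move=> a; exact: pi_ge0.
- by move=> a; exact: q0.
- by move=> a /qpi.
- by apply: qr; apply: le3_upd (le3_refl w) _.
- by apply: qr; apply: le3_upd (le3_refl w) _.
Qed.

Lemma resampled_le_star q x y v : incr q -> le3 x y -> y v = sstar ->
  (q (upd x v s0) + q (upd x v s1)) * pi y <= q y * (pi (upd x v s0) + pi (upd x v s1)).
Proof.
case=> _ _ qr xy yv; rewrite mulrDl mulrDr lerD //; apply: qr.
all: by rewrite -(upd_id y v) yv; apply: le3_upd.
Qed.

Lemma resampled_le q x y v : incr q -> le3 x y -> 0 < pi x -> 0 < pi y ->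
  (q (upd x v s0) + q (upd x v s1)) * (pi (upd y v s0) + pi (upd y v s1)) <=
  (q (upd y v s0) + q (upd y v s1)) * (pi (upd x v s0) + pi (upd x v s1)).
Proof.
case=> q0 qpi qr xy px py.
apply: mediant_le; rewrite ?pi_ge0 ?pi_cross //; try by move/qpi.
all: by apply: qr; apply: le3_upd.
Qed.

Lemma pi_le_resampled x v : x v != sstar -> pi x <= pi (upd x v s0) + pi (upd x v s1).
Proof.
rewrite -[pi x](congr1 pi (upd_id x v)); case: (spin3P (x v)) => -> // _.
- by rewrite lerDl pi_ge0.
- by rewrite lerDr pi_ge0.
Qed.

Lemma increasing_density_alg_site q v : incr q -> incr (step q (site_kernel alg_site_law v)).
Proof.
move=> qi; case: (qi) => q0 qpi qr; split=> [z|z pz|x y xy]; rewrite !step_alg_site.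
- case: ifP => _; first exact: q0.
  by rewrite mulr_ge0 ?divr_ge0 ?addr_ge0 ?pi_ge0 ?q0.
- by case: ifP => _; [exact: qpi | rewrite pz mul0r mulr0].
have := forallP xy v.
case: (eqVneq (y v) sstar) => yv; case: (eqVneq (x v) sstar) => xv /= xvyv.
- exact: qr.
- set Sx := _ + pi (upd x v s1).
  have [S0|S0] := eqVneq Sx 0.
    by rewrite S0 invr0 !mulr0 mul0r mulr_ge0 ?pi_ge0.
  have -> : q y * pi x = q y * Sx * (pi x / Sx) by field.
  by rewrite mulrAC ler_wpM2r ?divr_ge0 ?addr_ge0 ?pi_ge0 ?resampled_le_star.
- by move: xvyv; rewrite xv; case: (spin3P (y v)) yv => ->.
have [px|px] := eqVneq (pi x) 0; first by rewrite px !(mul0r, mulr0).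
have [py|py] := eqVneq (pi y) 0; first by rewrite py !(mul0r, mulr0).
have px_gt0 : 0 < pi x by rewrite lt0r px pi_ge0.
have py_gt0 : 0 < pi y by rewrite lt0r py pi_ge0.
have Sx_gt0 := lt_le_trans px_gt0 (pi_le_resampled xv).
have Sy_gt0 := lt_le_trans py_gt0 (pi_le_resampled yv).
have key := resampled_le v qi xy px_gt0 py_gt0.
set Sx := _ + pi (upd x v s1) in Sx_gt0 key *; set Sy := _ + pi (upd y v s1) in Sy_gt0 key *.
set A := q _ + q (upd x v s1) in key *; set B := q _ + q (upd y v s1) in key *.
have -> : A * (pi x / Sx) * pi y = A * Sy * (pi x * pi y / (Sx * Sy)).
  by field; rewrite !gt_eqF.
have -> : B * (pi y / Sy) * pi x = B * Sx * (pi x * pi y / (Sx * Sy)).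
  by field; rewrite !gt_eqF.
by rewrite ler_wpM2r // divr_ge0 ?mulr_ge0 ?ltW.
Qed.

Lemma increasing_density_alg_step q : incr q -> incr (step q (K_alg th mu)).
Proof.
move=> qi; apply: (eq_increasing_density (q := fun z => \sum_v #|V|%:R^-1 *
  step q (site_kernel alg_site_law v) z)); first by move=> z; rewrite [RHS]step_avg.
apply: increasing_density_mix => v; first by rewrite invr_ge0 ler0n.
exact: increasing_density_alg_site.
Qed.

Definition contr_marginal (q : conf3 -> R) s := \sum_y (contr y == s)%:R * q y.

Lemma step_contr_lift q z : step q (K_contr_lift th) z = lift_law th (contr_marginal q) z.
Proof.
rewrite ffunE /lift_law /contr_marginal mulr_sumr; apply: eq_bigr => y _.
rewrite /K_contr_lift; have [->|ne] := eqVneq (contr y) (contr z).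
  by rewrite mul1r mulrC.
by rewrite liftP_eq0 // !(mul0r, mulr0).
Qed.

Lemma increasing_density_lift F :
  increasing_density (ffun_rel implb) mu F -> incr (lift_law th F).
Proof.
case=> F0 Fmu Fr; split=> [y|y /eqP|x y xy].
- by rewrite mulr_ge0 ?liftP_ge0.
- by rewrite pi_eq0 => /eqP/Fmu; rewrite /lift_law => ->; rewrite mulr0.
rewrite !piE /lift_law; have := Fr _ _ (le3_contr xy).
set a := liftP th (contr x) x; set b := liftP th (contr y) y => Fxy.
have -> : a * F (contr x) * (b * mu (contr y)) = a * b * (F (contr x) * mu (contr y)) by ring.
have -> : b * F (contr y) * (a * mu (contr x)) = a * b * (F (contr y) * mu (contr x)) by ring.
by rewrite ler_wpM2l ?mulr_ge0 ?liftP_ge0.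
Qed.

Lemma liftP_gt0_contr s y : 0 < liftP th s y -> s = contr y.
Proof. by have [//|ne] := eqVneq s (contr y); rewrite liftP_eq0 // ltxx. Qed.

Lemma contr_marginal_ratio q s : 0 < mu s ->
  contr_marginal q s = mu s * \sum_y liftP th s y * (q y / pi y).
Proof.
move=> ms; rewrite /contr_marginal mulr_sumr; apply: eq_bigr => y _.
have [sy|ne] := eqVneq (contr y) s; last by rewrite liftP_eq0 1?eq_sym // !(mul0r, mulr0).
rewrite mul1r piE /lift_law sy; field.
by rewrite (gt_eqF ms) -sy (gt_eqF (liftP_contr_gt0 th_gt0 th_lt1 y)).
Qed.

(* The lifts of comparable configurations are coupled, and on their supports the density q / pi
   is nondecreasing. *)
Lemma increasing_density_contr_marginal q :
  incr q -> increasing_density (ffun_rel implb) mu (contr_marginal q).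
Proof.
move=> qi; case: (qi) => q0 qpi qr.
have M0 s : mu s = 0 -> contr_marginal q s = 0.
  move=> ms; rewrite /contr_marginal big1 // => y _.
  have [e|] := eqVneq (contr y) s; last by rewrite mul0r.
  by rewrite qpi ?mulr0 //; apply/eqP; rewrite pi_eq0 e ms.
split=> // [s|s s' ss'].
  by rewrite sumr_ge0 // => y _; rewrite mulr_ge0 ?q0.
have [ms|ms] := eqVneq (mu s) 0; first by rewrite ms (M0 s) // mul0r mulr0.
have [ms'|ms'] := eqVneq (mu s') 0; first by rewrite ms' (M0 s') // mulr0 mul0r.
have ms_gt0 : 0 < mu s by rewrite lt0r ms mu_ge0.
have ms'_gt0 : 0 < mu s' by rewrite lt0r ms' mu_ge0.
have EE' : \sum_y liftP th s y * (q y / pi y) <= \sum_y liftP th s' y * (q y / pi y).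
  apply: (coupled_sum_le (coupled_liftP th_gt0 th_lt1 ss')) => y y' yy'.
  move=> /liftP_gt0_contr sy /liftP_gt0_contr s'y'.
  have py : 0 < pi y by apply: pi_gt0; rewrite -sy.
  have py' : 0 < pi y' by apply: pi_gt0; rewrite -s'y'.
  by rewrite ler_pdivrMr // mulrAC ler_pdivlMr // qr.
rewrite !contr_marginal_ratio //.
move: EE'; set E := \sum_y _ * _; set E' := \sum_y _ * _ => EE'.
have -> : mu s * E * mu s' = mu s * mu s' * E by ring.
have -> : mu s' * E' * mu s = mu s * mu s' * E' by ring.
by rewrite ler_wpM2l // mulr_ge0 // ltW.
Qed.

Lemma increasing_density_contr_lift q : incr q -> incr (step q (K_contr_lift th)).
Proof.
move=> qi; apply: (eq_increasing_density (q := lift_law th (contr_marginal q))).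
  by move=> z; rewrite step_contr_lift.
exact/increasing_density_lift/increasing_density_contr_marginal.
Qed.

Definition lifted (p : conf3 -> R) := exists F : conf -> R,
  [/\ forall s, 0 <= F s, forall s, mu s = 0 -> F s = 0 & p =1 lift_law th F].

Lemma lifted_pi_gt0 p x : lifted p -> 0 < p x -> 0 < pi x.
Proof.
case=> F [_ Fmu pF] px; apply: pi_gt0; rewrite lt0r mu_ge0 andbT.
by apply: contraTneq px => /Fmu; rewrite pF /lift_law => ->; rewrite mulr0 ltxx.
Qed.

Lemma contr_marginal_lift F s : contr_marginal (lift_law th F) s = F s.
Proof.
transitivity (\sum_y liftP th s y * F s); last by rewrite -mulr_suml sum_liftP mul1r.
apply: eq_bigr => y _; rewrite /lift_law.
have [<-|ne] := eqVneq (contr y) s; first by rewrite mul1r.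
by rewrite [liftP th s y]liftP_eq0 1?eq_sym // !mul0r.
Qed.

Lemma step_contr_lift_lifted (p : {ffun conf3 -> R}) : lifted p -> step p (K_contr_lift th) = p.
Proof.
case=> F [_ _ pF]; apply/ffunP => z; rewrite step_contr_lift pF /lift_law.
congr (_ * _); rewrite -[RHS](contr_marginal_lift F).
by apply: eq_bigr => y _; rewrite pF.
Qed.

(* On lifted laws the Glauber dynamics of pi acts as the Glauber dynamics of mu. *)
Lemma step_GD_site_lifted (p : {ffun conf3 -> R}) F v : p =1 lift_law th F ->
  step p (site_kernel (cond pi) v) =1
  lift_law th (fun s => (\sum_b F (upd s v b)) * cond mu s v (s v)).
Proof.
move=> pF z; rewrite step_site_cond /cond upd_id.
under eq_bigr do rewrite pF.
under [X in _ * (_ / X)]eq_bigr do rewrite piE.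
rewrite !sum_lift_law_upd piE /lift_law upd_id !big_bool /=.
have C_gt0 := rest_weight_gt0 th_gt0 th_lt1 z v.
set C := rest_weight _ z v; set m := mu (upd _ v false) + mu (upd _ v true).
rewrite [mu (upd _ v true) + _]addrC -/m [F (upd _ v true) + _]addrC.
have [->|m0] := eqVneq m 0; first by rewrite !(mulr0, invr0).
by field; rewrite m0 gt_eqF.
Qed.

Lemma lifted_GD_step (p : {ffun conf3 -> R}) : lifted p -> lifted (step p (K_GD th mu)).
Proof.
case=> F [F0 Fmu pF].
pose G v s := (\sum_b F (upd s v b)) * cond mu s v (s v).
exists (fun s => \sum_v #|V|%:R^-1 * G v s); split.
- move=> s; apply: sumr_ge0 => v _; rewrite mulr_ge0 ?invr_ge0 ?ler0n //.
  by apply: mulr_ge0; [apply: sumr_ge0 | apply: divr_ge0; last apply: sumr_ge0].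
- move=> s ms; rewrite big1 // => v _.
  by rewrite /G /cond upd_id ms !(mul0r, mulr0).
move=> z; rewrite step_avg /lift_law mulr_sumr; apply: eq_bigr => v _.
by rewrite (step_GD_site_lifted _ pF) /lift_law mulrCA.
Qed.

Lemma ones_le (s : conf) : ffun_rel implb (ones V) s -> s = ones V.
Proof. by move=> /forallP le; apply/ffunP => v; move: (le v); rewrite !ffunE; case: (s v). Qed.

Lemma law_lift_onesE : (@law_lift_ones _ V th) =1 lift_law th (fun s => (s == ones V)%:R).
Proof.
move=> y; rewrite ffunE /lift_law; have [<-|ne] := eqVneq (contr y) (ones V).
  by rewrite mulr1.
by rewrite mulr0 liftP_eq0 // eq_sym.
Qed.

Lemma lifted_lift_ones : lifted ((@law_lift_ones _ V th)).
Proof.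
exists (fun s => (s == ones V)%:R); split=> [s|s ms|]; last exact: law_lift_onesE.
  by rewrite ler0n.
by case: eqP => // sE; move: mu_ones; rewrite -sE ms ltxx.
Qed.

Lemma increasing_density_lift_ones : incr ((@law_lift_ones _ V th)).
Proof.
apply: (eq_increasing_density (q := lift_law th (fun s => (s == ones V)%:R))).
  by move=> y; rewrite law_lift_onesE.
apply: increasing_density_lift; split=> [s|s ms|s s' ss'].
- by rewrite ler0n.
- by case: eqP => // sE; move: mu_ones; rewrite -sE ms ltxx.
- have [sE|_] := eqVneq s (ones V); last by rewrite mul0r mulr_ge0 ?ler0n.
  by move: ss'; rewrite sE => /ones_le ->; rewrite eqxx.
Qed.

Lemma law_invariants T2 t :
  [/\ sd (law_GD th mu t) (law_alg th mu T2 t), incr (law_alg th mu T2 t) &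
      lifted (law_GD th mu t)].
Proof.
elim: t => [|t [sd_t incr_t lifted_t]] /=.
  have [q0 _ _] := increasing_density_lift_ones.
  by split; [exact: sd_refl q0 | exact: increasing_density_lift_ones | exact: lifted_lift_ones].
set p := if (T2 %| t)%N then _ else _.
have [sd_gp incr_p] : sd (law_GD th mu t) p /\ incr p.
  rewrite /p; case: (T2 %| t)%N => //; split; last exact: increasing_density_contr_lift.
  rewrite -(step_contr_lift_lifted lifted_t); apply: (sd_step sd_t) => x y xy _ _.
  exact/(coupled_liftP th_gt0 th_lt1)/le3_contr.
split; last exact: lifted_GD_step.
- apply: sd_trans (sd_GD_alg_step incr_p); apply: (sd_step sd_gp) => x y xy gx py.
  apply: coupled_GD_kernel => //; first exact: lifted_pi_gt0 lifted_t gx.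
  exact: increasing_density_gt0 pi_ge0 incr_p py.
- exact: increasing_density_alg_step.
Qed.

End Glauber.

Theorem lemma3p3 (R : realFieldType) (V : finType)
    (mu : {ffun {ffun V -> bool} -> R}) (theta : R) (T1 T2 t : nat) :
  is_distr mu ->
  monotone_system mu ->
  0 < mu (ones V) ->
  0 < theta < 1 ->
  (1 <= T1)%N -> (1 <= T2)%N ->
  (t <= T1 * T2)%N ->
  sd (law_GD theta mu t) (law_alg theta mu T2 t).
Proof.
move=> [mu_ge0 _] mu_mono mu_ones /andP[th_gt0 th_lt1] _ _ _.
by case: (law_invariants th_gt0 th_lt1 mu_ge0 mu_ones mu_mono T2 t).
Qed.
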